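(* Let $n\geq6$ and let $Z\in\mathbb{R}^{n\times4}$ be totally positive satisfying Assumption (G). For any $i,j,k\in[n]$ such that the pairs $\{i,i+1\},\{j,j+1\},\{k,k+1\}$ (indices mod $n$) are pairwise disjoint, the conic $L_{i(i+1)}\cap L_{j(j+1)}\cap L_{k(k+1)}\subset\mathrm{Gr}_{\mathbb{C}}(2,4)$ of lines meeting the three lines $Z_iZ_{i+1}$, $Z_jZ_{j+1}$, $Z_kZ_{k+1}$ does not intersect $\mathcal{A}_n(Z)$.
   Context: $Z$ totally positive: all $4\times4$ minors positive; its rows $Z_1,\dots,Z_n$ are points of $\mathbb{P}^3$. $\mathcal{A}_n(Z)\subset\mathrm{Gr}_{\mathbb{R}}(2,4)$ is the image of the totally nonnegative Grassmannian $\mathrm{Gr}(2,n)_{\ge0}$ under $\mathrm{rowspan}(X)\mapsto\mathrm{rowspan}(XZ)$. $\langle AB\,ij\rangle$ is the determinant of the matrix with rows $A,B,Z_i,Z_j$. Assumption (G): no line $AB$ has more than $4$ of $\langle AB\,i(i+1)\rangle$, $i\in[n]$ (cyclically), vanishing. *)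

From HB Require Import structures.
From mathcomp Require Import all_boot all_order all_algebra.
Set Implicit Arguments. Unset Strict Implicit. Unset Printing Implicit Defensive.
Import Order.TTheory GRing.Theory Num.Theory.
Local Open Scope ring_scope.

Definition nxt (n : nat) (i : 'I_n) : 'I_n := ordS i.

Definition bracket (R : comNzRingType) (A B C D : 'rV[R]_4) : R :=
  \det (\matrix_(r < 4, c < 4) (nth A [:: A; B; C; D] r) 0 c).

Definition totally_positive (R : realFieldType) (n : nat) (Z : 'M[R]_(n, 4)) :=
  forall f : 'I_4 -> 'I_n, (forall a b : 'I_4, (a < b)%N -> (f a < f b)%N) ->
    0 < \det (rowsub f Z).

Definition tnn_gr2 (R : realFieldType) (n : nat) (X : 'M[R]_(2, n)) :=
  \rank X = 2%N /\
  forall a b : 'I_n, (a < b)%N -> 0 <= X 0 a * X 1 b - X 0 b * X 1 a.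

(* Lines (A,B independent in R^4) of the amplituhedron A_n(Z): A, B are the
   two rows of XZ for some X in Gr(2,n)_{>=0} (with rowspan(XZ) in Gr(2,4)). *)
Definition in_amplituhedron (R : realFieldType) (n : nat) (Z : 'M[R]_(n, 4))
  (A B : 'rV[R]_4) :=
  \rank (col_mx A B) = 2%N /\
  exists X : 'M[R]_(2, n), tnn_gr2 X /\ A = row 0 (X *m Z) /\ B = row 1 (X *m Z).

Definition assumptionG (R : realFieldType) (n : nat) (Z : 'M[R]_(n, 4)) :=
  forall A B : 'rV[R]_4, \rank (col_mx A B) = 2%N ->
    (#|[set i : 'I_n | bracket A B (row i Z) (row (nxt i) Z) == 0%R]| <= 4)%N.

Definition cpair (n : nat) (i : 'I_n) : {set 'I_n} := [set i; nxt i].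

From HB Require Import structures.
From mathcomp Require Import all_boot all_order all_algebra perm zify.
Set Implicit Arguments. Unset Strict Implicit. Unset Printing Implicit Defensive.
Import Order.TTheory GRing.Theory Num.Theory.
Local Open Scope ring_scope.

(* Write the line as Y = rowspan (X Z) with X in Gr(2,n)_{>=0}. Multilinearity of the
   bracket gives 2 <Y Z_i Z_(i+1)> = sum_(a,b) p_ab(X) <Z_a Z_b Z_i Z_(i+1)>, where p_ab
   are the Plücker coordinates of X. For a < b outside {i, i+1}, total positivity of Z
   gives all the brackets <Z_a Z_b Z_i Z_(i+1)> one common sign, and p_ab(X) >= 0, so
   the sum vanishes only if each such p_ab(X) does. Any two indices miss one of three
   pairwise disjoint pairs, so three vanishing brackets kill every Plücker coordinate
   of X, and X cannot have rank 2. *)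

Lemma det_xrow (R : comNzRingType) n (M : 'M[R]_n) i1 i2 :
  i1 != i2 -> \det (xrow i1 i2 M) = - \det M.
Proof. by move=> ne; rewrite xrowE det_mulmx det_perm odd_tperm ne mulN1r. Qed.

Section Bracket.
Variable R : comNzRingType.
Implicit Types (A B C D u v : 'rV[R]_4) (a : R).

Lemma bracketC12 A B C D : bracket B A C D = - bracket A B C D.
Proof.
rewrite /bracket -(@det_xrow _ _ _ 0 1) //; congr (\det _).
by apply/matrixP => r c; rewrite !mxE permE; case: r => [[|[|[|[|r]]]] hr].
Qed.

Lemma bracketC23 A B C D : bracket A C B D = - bracket A B C D.
Proof.
rewrite /bracket -(@det_xrow _ _ _ 1 2) //; congr (\det _).
by apply/matrixP => r c; rewrite !mxE permE; case: r => [[|[|[|[|r]]]] hr].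
Qed.

Lemma bracketC34 A B C D : bracket A B D C = - bracket A B C D.
Proof.
rewrite /bracket -(@det_xrow _ _ _ 2 3) //; congr (\det _).
by apply/matrixP => r c; rewrite !mxE permE; case: r => [[|[|[|[|r]]]] hr].
Qed.

Lemma bracketDZl a u v B C D :
  bracket (a *: u + v) B C D = a * bracket u B C D + bracket v B C D.
Proof.
rewrite -[bracket v _ _ _]mul1r; apply: determinant_multilinear (0 : 'I_4) _ _ _ _ _.
- by apply/rowP => c; rewrite !mxE mul1r.
- by apply/matrixP => r c; rewrite !mxE; case: r => [[|[|[|r]]] hr].
- by apply/matrixP => r c; rewrite !mxE; case: r => [[|[|[|r]]] hr].
Qed.

Lemma bracket_rot3 A B C D : bracket A C D B = bracket A B C D.
Proof. by rewrite bracketC34 bracketC23 opprK. Qed.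

Lemma bracket_rot4 A B C D : bracket D A B C = - bracket A B C D.
Proof. by rewrite bracketC12 -bracket_rot3. Qed.

Lemma bracket_swap_pairs A B C D : bracket C D A B = bracket A B C D.
Proof. by rewrite 2!bracket_rot4 opprK. Qed.

Lemma bracket_alternate A B C D :
  [|| A == C, A == D, B == C | B == D] -> bracket A B C D = 0.
Proof.
have ACeq0 A' B' D' : bracket A' B' A' D' = 0.
  by apply: (@determinant_alternate _ _ _ 0 2) => // c; rewrite !mxE.
case/or4P=> /eqP->; first exact: ACeq0.
- by rewrite bracketC34 ACeq0 oppr0.
- by rewrite bracketC12 ACeq0 oppr0.
- by rewrite bracketC12 bracketC34 ACeq0 !oppr0.
Qed.

Lemma bracket0l B C D : bracket 0 B C D = 0.
Proof.
have := bracketDZl 1 0 0 B C D; rewrite scale1r addr0 mul1r.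
by move=> h; apply: (addrI (bracket 0 B C D)); rewrite addr0 -h.
Qed.

Lemma bracket_suml (I : finType) (x : I -> R) (u : I -> 'rV_4) B C D :
  bracket (\sum_a x a *: u a) B C D = \sum_a x a * bracket (u a) B C D.
Proof.
elim/big_rec2: _ => [|a _ s _ <-]; first exact: bracket0l.
exact: bracketDZl.
Qed.

Lemma bracket_sumr (I : finType) (x : I -> R) (u : I -> 'rV_4) A C D :
  bracket A (\sum_a x a *: u a) C D = \sum_a x a * bracket A (u a) C D.
Proof.
rewrite bracketC12 bracket_suml -sumrN.
by apply: eq_bigr => a _; rewrite bracketC12 mulrN opprK.
Qed.

End Bracket.

Definition plucker (R : comNzRingType) n (X : 'M[R]_(2, n)) (a b : 'I_n) : R :=
  X 0 a * X 1 b - X 0 b * X 1 a.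

Lemma pluckerC (R : comNzRingType) n (X : 'M[R]_(2, n)) a b :
  plucker X b a = - plucker X a b.
Proof. by rewrite /plucker opprB. Qed.

Lemma plucker_diag (R : comNzRingType) n (X : 'M[R]_(2, n)) a : plucker X a a = 0.
Proof. exact: subrr. Qed.

Lemma plucker_expansion (R : comNzRingType) n (X : 'M[R]_(2, n))
    (Z : 'M[R]_(n, 4)) C D :
  \sum_a \sum_b plucker X a b * bracket (row a Z) (row b Z) C D =
  2 * bracket (row 0 (X *m Z)) (row 1 (X *m Z)) C D.
Proof.
pose br a b := bracket (row a Z) (row b Z) C D.
pose S := \sum_a \sum_b X 0 a * X 1 b * br a b.
have rowXZ r : row r (X *m Z) = \sum_a X r a *: row a Z.
  by rewrite row_mul mulmx_sum_row; apply: eq_bigr => a _; rewrite mxE.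
have -> : bracket (row 0 (X *m Z)) (row 1 (X *m Z)) C D = S.
  rewrite !rowXZ bracket_suml; apply: eq_bigr => a _.
  by rewrite bracket_sumr mulr_sumr; apply: eq_bigr => b _; rewrite mulrA.
have swapS : \sum_a \sum_b X 0 b * X 1 a * br a b = - S.
  rewrite exchange_big -sumrN; apply: eq_bigr => a _.
  by rewrite -sumrN; apply: eq_bigr => b _; rewrite /br bracketC12 mulrN.
transitivity (S - \sum_a \sum_b X 0 b * X 1 a * br a b).
  rewrite -sumrB; apply: eq_bigr => a _; rewrite -sumrB; apply: eq_bigr => b _.
  by rewrite mulrBl.
by rewrite swapS opprK mulr_natl mulr2n.
Qed.

Lemma val_nxt n (i : 'I_n) : nat_of_ord (nxt i) = (if i.+1 == n then 0 else i.+1)%N.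
Proof.
rewrite /nxt /=; case: eqP => [->|ne]; first by rewrite modnn.
by rewrite modn_small //; have := ltn_ord i; lia.
Qed.

Lemma notin_cpairE n (i a : 'I_n) :
  (a \notin cpair i) = (a != i :> nat) && (a != nxt i :> nat).
Proof. by rewrite !inE negb_or. Qed.

Lemma bracket_cpair (R : comNzRingType) n (Z : 'M[R]_(n, 4)) (i c d : 'I_n) :
  (c \in cpair i) || (d \in cpair i) ->
  bracket (row c Z) (row d Z) (row i Z) (row (nxt i) Z) = 0.
Proof.
by rewrite !inE => /orP[/orP[]|/orP[]] /eqP-> ; apply: bracket_alternate;
  rewrite !eqxx ?orbT.
Qed.

Lemma plucker_eq0_rank_le1 (F : fieldType) n (X : 'M[F]_(2, n)) :
  (forall a b, plucker X a b = 0) -> (\rank X <= 1)%N.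
Proof.
move=> hp; have minorE a b : X 0 a * X 1 b = X 0 b * X 1 a.
  by apply/eqP; rewrite -subr_eq0; apply/eqP/hp.
have rows2 (r0 : 'I_2) : (row 0 X <= row r0 X)%MS -> (row 1 X <= row r0 X)%MS ->
    (\rank X <= 1)%N.
  move=> h0 h1; apply: leq_trans (rank_leq_row (row r0 X)).
  apply/mxrankS/row_subP => -[[|[|//]] lt_r2].
  - by rewrite (_ : Ordinal lt_r2 = 0) //; apply: val_inj.
  - by rewrite (_ : Ordinal lt_r2 = 1) //; apply: val_inj.
case: (pickP (fun a => X 0 a != 0)) => [a Xa | X0].
  apply: (rows2 0) => //; apply/sub_rVP; exists (X 1 a / X 0 a).
  apply/rowP => c; rewrite !mxE; apply: (mulfI Xa).
  by rewrite mulrA mulrCA mulfV // mulr1 minorE mulrC.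
apply: (rows2 1) => //; rewrite (_ : row 0 X = 0) ?sub0mx //.
by apply/rowP => c; rewrite !mxE; move/negbFE/eqP: (X0 c).
Qed.

Lemma notin_disjoint3 (T : finType) (P Q S : {set T}) x y :
  [disjoint P & Q] -> [disjoint P & S] -> [disjoint Q & S] ->
  [|| (x \notin P) && (y \notin P), (x \notin Q) && (y \notin Q)
    | (x \notin S) && (y \notin S)].
Proof.
move=> dPQ dPS dQS.
have notQS z : (z \notin Q) || (z \notin S).
  by case: (boolP (z \in Q)) => // /(disjointFr dQS) ->.
case xP: (x \in P); case yP: (y \in P) => //=.
- rewrite (disjointFr dPQ xP) (disjointFr dPS xP) (disjointFr dPQ yP).
  by rewrite (disjointFr dPS yP).
- by rewrite (disjointFr dPQ xP) (disjointFr dPS xP) /= notQS.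
- by rewrite (disjointFr dPQ yP) (disjointFr dPS yP) /= !andbT notQS.
Qed.

Section TotallyPositive.
Variables (R : realFieldType) (n : nat) (Z : 'M[R]_(n, 4)).
Hypothesis tpZ : totally_positive Z.

Let br (i a b : 'I_n) := bracket (row a Z) (row b Z) (row i Z) (row (nxt i) Z).

Lemma bracket_sorted_gt0 (a b c d : 'I_n) : (a < b)%N -> (b < c)%N -> (c < d)%N ->
  0 < bracket (row a Z) (row b Z) (row c Z) (row d Z).
Proof.
move=> ab bc cd.
have -> : bracket (row a Z) (row b Z) (row c Z) (row d Z) =
          \det (rowsub (fun r : 'I_4 => nth a [:: a; b; c; d] r) Z).
  congr (\det _); apply/matrixP => r s; rewrite !mxE.
  by case: r => [[|[|[|[|r]]]] hr] //=; rewrite mxE.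
apply: tpZ => -[[|[|[|[|r]]]] hr] -[[|[|[|[|s]]]] hs] //= _; lia.
Qed.

(* The pair {i, i+1} wraps around when i = n - 1, and moving Z_0 to the front of
   <Z_a Z_b Z_(n-1) Z_0> is an odd permutation. *)
Definition pair_sign (i : 'I_n) : R := if i.+1 == n then -1 else 1.

Lemma pair_sign_bracket_gt0 (i a b : 'I_n) :
  (a < b)%N -> a \notin cpair i -> b \notin cpair i -> 0 < pair_sign i * br i a b.
Proof.
rewrite /br /pair_sign !notin_cpairE val_nxt.
move=> ab /andP[ai ai'] /andP[bi bi']; have := ltn_ord b.
case: (i.+1 =P n) ai' bi' => [wrap | /eqP/negbTE nowrap] ai' bi' ltbn.
  rewrite mulN1r -bracket_rot4; apply: bracket_sorted_gt0;
  by rewrite ?val_nxt ?wrap ?eqxx; lia.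
rewrite mul1r.
have : (b < i \/ (a < i /\ i.+1 < b) \/ i.+1 < a)%N by lia.
case=> [?|[[? ?]|?]]; [| rewrite -bracket_rot3 | rewrite -bracket_swap_pairs];
  by apply: bracket_sorted_gt0; rewrite ?val_nxt ?nowrap /=; lia.
Qed.

Variable X : 'M[R]_(2, n).
Hypothesis tnnX : tnn_gr2 X.

Lemma plucker_bracket_ge0 (i a b : 'I_n) :
  0 <= pair_sign i * (plucker X a b * br i a b).
Proof.
wlog ab : a b / (a < b)%N => [gen|].
  have swap : plucker X a b * br i a b = plucker X b a * br i b a.
    by rewrite pluckerC /br bracketC12 mulrNN.
  case: (ltngtP a b) => [/gen // | /gen | /val_inj->]; first by rewrite swap.
  by rewrite plucker_diag mul0r mulr0.
case: (boolP ((a \in cpair i) || (b \in cpair i))) => [shared | ].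
  by rewrite /br bracket_cpair // !mulr0.
rewrite negb_or => /andP[ai bi].
rewrite mulrCA mulr_ge0 ?(tnnX.2 a b ab) //.
exact: ltW (pair_sign_bracket_gt0 ab ai bi).
Qed.

Lemma plucker_eq0_off_pair (i : 'I_n) :
  bracket (row 0 (X *m Z)) (row 1 (X *m Z)) (row i Z) (row (nxt i) Z) = 0 ->
  forall a b, a \notin cpair i -> b \notin cpair i -> plucker X a b = 0.
Proof.
move=> Yi0 a b.
have terms0 c d : pair_sign i * (plucker X c d * br i c d) = 0.
  have := congr1 (fun s => pair_sign i * s)
    (plucker_expansion X Z (row i Z) (row (nxt i) Z)).
  rewrite /= Yi0 !mulr0 pair_bigA mulr_sumr => /psumr_eq0P sum0.
  by apply: (sum0 _ (c, d)) => // p _; apply: plucker_bracket_ge0.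
wlog ab : a b / (a < b)%N => [gen ai bi|ai bi].
  case: (ltngtP a b) => [/gen ->// | /gen ba | /val_inj->]; last exact: plucker_diag.
  by rewrite pluckerC ba ?oppr0.
have := terms0 a b; rewrite mulrCA => /eqP; rewrite mulf_eq0 => /orP[/eqP //|].
by rewrite gt_eqF // pair_sign_bracket_gt0.
Qed.

End TotallyPositive.

Theorem lemma4p6 (R : realFieldType) (n : nat) (Z : 'M[R]_(n, 4))
  (hn : (6 <= n)%N) (hZ : totally_positive Z) (hG : assumptionG Z)
  (i j k : 'I_n)
  (hij : [disjoint cpair i & cpair j]) (hik : [disjoint cpair i & cpair k])
  (hjk : [disjoint cpair j & cpair k]) :
  forall A B : 'rV[R]_4, in_amplituhedron Z A B ->
    ~ [/\ bracket A B (row i Z) (row (nxt i) Z) = 0,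
          bracket A B (row j Z) (row (nxt j) Z) = 0 &
          bracket A B (row k Z) (row (nxt k) Z) = 0].
Proof.
move=> A B [_ [X [tnnX [-> ->]]]] [Yi0 Yj0 Yk0].
have plucker0 a b : plucker X a b = 0.
  case/or3P: (notin_disjoint3 a b hij hik hjk) => /andP[].
  - exact: (plucker_eq0_off_pair hZ tnnX Yi0).
  - exact: (plucker_eq0_off_pair hZ tnnX Yj0).
  - exact: (plucker_eq0_off_pair hZ tnnX Yk0).
by have := plucker_eq0_rank_le1 plucker0; rewrite tnnX.1.
Qed.
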